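(* Assume the user paths are pairwise edge-disjoint. Let $E^*$ be an $s$-$t$ path maximizing $\Lambda(\cdot,P)$ over all directed $s$-$t$ paths, and let $d$ be its number of edges. If the initial recursion depth satisfies $I\ge\lceil\log d\rceil$, then the Recursive Greedy algorithm (with $F=\Lambda(\cdot,P)$) returns an $s$-$t$ path $E_{\mathbf{f}}$ with $\Lambda(E_{\mathbf{f}},P)\ge\frac{1}{\lceil\log d\rceil+1}\Lambda(E^*,P)$. (Logarithms are base 2.)
   Context: $G=(V,E)$ is a simple directed acyclic graph with capacities $C\in\mathbb{R}_{\ge0}^E$, $s,t\in V$ joined by a directed path, and budget $0<\gamma\le\min_eC(e)$. User paths $P=\{p_1,\dots,p_k\}$ are directed paths (edge sets) with initial values $\lambda_i\ge0$, $\sum_{i:e\in p_i}\lambda_i\le C(e)$. For $A\subseteq E$, $T(A,P)$ is the optimal value of: maximize $\sum_i\tilde\lambda_i$ s.t. $\sum_{i:e\in p_i}\tilde\lambda_i\le C(e)-\gamma\mathbf{1}_{\{e\in A\}}$ for all $e$, $0\le\tilde\lambda_i\le\lambda_i$; $\Lambda(A,P)=\sum_i\lambda_i-T(A,P)$. (For an $s$-$t$ path $E'$, $\Lambda(E',P)$ equals the throughput reduction caused by injecting flow $\gamma$ along $E'$.) Recursive Greedy algorithm for a set function $F:2^E\to\mathbb{R}$, with $F_X(A)=F(A\cup X)-F(X)$: the recursive procedure $RG(u_1,u_2,X,i)$ ($u_1,u_2\in V$, $X\subseteq E$, integer $i\ge0$) lets $S$ be a shortest (fewest edges) directed $u_1$-$u_2$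 path; if none exists it returns ''infeasible''; if $i=0$ it returns $S$; otherwise it sets $best:=S$, $r:=F_X(S)$ and, for every $v\in V$, computes $Q_1=RG(u_1,v,X,i-1)$ and then $Q_2=RG(v,u_2,X\cup Q_1,i-1)$ (skipping $v$ if a call is infeasible), and if $F_X(Q_1\cup Q_2)>r$ sets $r:=F_X(Q_1\cup Q_2)$, $best:=Q_1\cup Q_2$; finally it returns $best$. The algorithm outputs $RG(s,t,\emptyset,I)$. *)

From HB Require Import structures.
From mathcomp Require Import all_boot all_order all_algebra.
From mathcomp Require Import classical_sets reals.
Set Implicit Arguments. Unset Strict Implicit. Unset Printing Implicit Defensive.
Import Order.TTheory GRing.Theory Num.Theory.
Local Open Scope ring_scope.

Definition adj (V : finType) (E : {set V * V}) : rel V := fun x y => (x, y) \in E.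

Definition edges_of (V : finType) (u : V) (p : seq V) : {set V * V} :=
  [set z in zip (u :: p) p].

(* p is the vertex sequence (after u) of a directed walk from u to w in E.
   (In a DAG every directed walk is a simple directed path.) *)
Definition dwalk (V : finType) (E : {set V * V}) (u w : V) (p : seq V) : bool :=
  path (adj E) u p && (last u p == w).

Definition is_dpath (V : finType) (E : {set V * V}) (u w : V) (Sp : {set V * V}) : Prop :=
  exists p, dwalk E u w p /\ Sp = edges_of u p.

Definition is_shortest_dpath (V : finType) (E : {set V * V}) (u w : V)
    (Sp : {set V * V}) : Prop :=
  exists p, [/\ dwalk E u w p, Sp = edges_of u p &
                forall q, dwalk E u w q -> (size p <= size q)%N].

Definition simple_dag (V : finType) (E : {set V * V}) : Prop :=
  (forall v, (v, v) \notin E) /\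
  (forall v p, path (adj E) v p -> last v p = v -> p = [::]).

Definition shortest_oracle (V : finType) (E : {set V * V})
    (sp : V -> V -> option {set V * V}) : Prop :=
  forall u w, match sp u w with
              | None => ~ exists q, dwalk E u w q
              | Some S0 => is_shortest_dpath E u w S0
              end.

Definition feasible (R : realType) (V : finType) (E : {set V * V})
    (C : V * V -> R) (gamma : R) (k : nat) (P : 'I_k -> {set V * V})
    (lam : 'I_k -> R) (A : {set V * V}) (lt : 'I_k -> R) : Prop :=
  (forall e, e \in E ->
     \sum_(i < k | e \in P i) lt i <= C e - gamma * (e \in A)%:R) /\
  (forall i, 0 <= lt i <= lam i).

(* T(A,P): optimal value of the LP (a supremum, attained since the polytope is
   compact and nonempty). *)
Definition T_val (R : realType) (V : finType) (E : {set V * V})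
    (C : V * V -> R) (gamma : R) (k : nat) (P : 'I_k -> {set V * V})
    (lam : 'I_k -> R) (A : {set V * V}) : R :=
  sup [set x : R | exists lt : 'I_k -> R,
                     feasible E C gamma P lam A lt /\ x = \sum_(i < k) lt i].

Definition Lambda (R : realType) (V : finType) (E : {set V * V})
    (C : V * V -> R) (gamma : R) (k : nat) (P : 'I_k -> {set V * V})
    (lam : 'I_k -> R) (A : {set V * V}) : R :=
  \sum_(i < k) lam i - T_val E C gamma P lam A.

Definition marg (R : realType) (V : finType) (F : {set V * V} -> R)
    (X A : {set V * V}) : R := F (A :|: X) - F X.

(* Recursive Greedy RG(u1,u2,X,i); sp is the shortest-path oracle and ord the
   order in which the vertices v are scanned.  None = "infeasible". *)
Fixpoint RG (R : realType) (V : finType) (sp : V -> V -> option {set V * V})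
    (ord : seq V) (F : {set V * V} -> R) (i : nat) (u1 u2 : V)
    (X : {set V * V}) {struct i} : option {set V * V} :=
  match sp u1 u2 with
  | None => None
  | Some S0 =>
    match i with
    | 0%N => Some S0
    | i'.+1 =>
      let step (acc : {set V * V} * R) (v : V) :=
        match RG sp ord F i' u1 v X with
        | None => acc
        | Some Q1 =>
          match RG sp ord F i' v u2 (X :|: Q1) with
          | None => acc
          | Some Q2 =>
            if acc.2 < marg F X (Q1 :|: Q2)
            then (Q1 :|: Q2, marg F X (Q1 :|: Q2)) else acc
          end
        end in
      Some (foldl step (S0, marg F X S0) ord).1
    end
  end.

(* With edge-disjoint user paths the LP defining T(A,P) decouples: user i
   keeps the rate min(lambda_i, min_{e in p_i} C(e) - gamma [e in A]).  Hence
   Lambda(.,P) is a sum of terms lambda_i - min(...), each nonnegative,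
   monotone and submodular, because the minimum for A u B is the minimum of
   the minima for A and for B.
   For a monotone submodular F, Recursive Greedy at depth i >= j approximates
   every walk of at most 2^j edges within factor j+1: cut the walk into two
   halves of at most 2^(j-1) edges at a vertex v; the recursive calls through
   v approximate the halves (for the marginals w.r.t. X and X u Q1), and
   submodularity costs one extra copy of F_X(Q1).  A path with d edges has
   d <= 2^(ceil(log d)).  The bound holds against every s-t path. *)
From HB Require Import structures.
From mathcomp Require Import all_boot all_order all_algebra.
From mathcomp Require Import classical_sets reals.
From mathcomp Require Import finset lra zify.
Set Implicit Arguments. Unset Strict Implicit. Unset Printing Implicit Defensive.
Import Order.TTheory GRing.Theory Num.Theory.
Local Open Scope ring_scope.

Lemma min_submod {R : realDomainType} (a b x : R) :
  Order.min a x + Order.min b x <= Order.min (Order.min a b) x + x.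
Proof. by rewrite !minElt; repeat case: ltP => ? //=; lra. Qed.

Lemma foldl_ind (T U : Type) (Q : T -> Prop) (g : T -> U -> T) a s :
  Q a -> (forall b u, Q b -> Q (g b u)) -> Q (foldl g a s).
Proof. by elim: s a => [|u s IHs] a //= Qa Qg; apply: IHs (Qg _ _ Qa) Qg. Qed.

Section ScoredFold.
Variables (T : Type) (U : eqType) (R : numDomainType) (g : T * R -> U -> T * R).
Hypothesis g_score_ge : forall a u, a.2 <= (g a u).2.

Lemma foldl_score_ge a s : a.2 <= (foldl g a s).2.
Proof.
by elim: s a => [|u s IHs] a //=; apply: le_trans (g_score_ge a u) (IHs _).
Qed.

Lemma foldl_score_ge_mem a s v x :
  v \in s -> (forall b, x <= (g b v).2) -> x <= (foldl g a s).2.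
Proof.
elim: s a => [|u s IHs] a //=; rewrite inE => /predU1P[<-|v_s] x_le.
  exact: le_trans (x_le a) (foldl_score_ge _ _).
exact: IHs.
Qed.

End ScoredFold.

Section LambdaDecomposition.
Variables (R : realType) (V : finType) (E : {set V * V}) (C : V * V -> R)
  (gamma : R) (k : nat) (P : 'I_k -> {set V * V}) (lam : 'I_k -> R).
Hypothesis gamma_gt0 : 0 < gamma.
Hypothesis gamma_le_cap : forall e, e \in E -> gamma <= C e.
Hypothesis lam_ge0 : forall i, 0 <= lam i.
Hypothesis disjoint_paths : forall i j, i != j -> [disjoint P i & P j].

Lemma residual_ge0 e (A : {set V * V}) : e \in E -> 0 <= C e - gamma * (e \in A)%:R.
Proof.
move=> /gamma_le_cap; case: (e \in A); rewrite ?mulr1 ?mulr0 ?subr0 ?subr_ge0 //.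
exact/le_trans/ltW.
Qed.

Definition opt_rate i (A : {set V * V}) : R :=
  \big[Order.min/lam i]_(e | (e \in P i) && (e \in E))
     (C e - gamma * (e \in A)%:R).

Lemma opt_rate_le i A : opt_rate i A <= lam i.
Proof.
by rewrite /opt_rate; elim/big_rec: _ => // e y _ le_y; rewrite ge_min le_y orbT.
Qed.

Lemma opt_rate_ge0 i A : 0 <= opt_rate i A.
Proof.
rewrite /opt_rate; elim/big_ind: _ => //; first by move=> x y; rewrite le_min => ->.
by move=> e /andP[_ /residual_ge0].
Qed.

Lemma opt_rate_setU i A B :
  opt_rate i (A :|: B) = Order.min (opt_rate i A) (opt_rate i B).
Proof.
rewrite /opt_rate; elim/big_rec3: _ => [|e y1 y2 y3 _ ->]; first by rewrite minxx.
suff -> : C e - gamma * (e \in A :|: B)%:R =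
    Order.min (C e - gamma * (e \in A)%:R) (C e - gamma * (e \in B)%:R).
  by rewrite minACA.
have := gamma_gt0; rewrite inE.
by case: (e \in A); case: (e \in B); rewrite ?minxx //= ?mulr1 ?mulr0 => ?;
  [rewrite min_l | rewrite min_r]; lra.
Qed.

Lemma feasible_opt_rate A : feasible E C gamma P lam A (opt_rate^~ A).
Proof.
split=> [e eE|i]; last by rewrite opt_rate_ge0 ?opt_rate_le.
have [i ePi|notin] := pickP (fun i => e \in P i); last first.
  by rewrite big_pred0 ?residual_ge0.
rewrite (bigD1 i) //= big1 ?addr0; last first.
  move=> j /andP[ePj ji].
  by rewrite (disjointFr (disjoint_paths ji) ePj) in ePi.
by rewrite /opt_rate (bigD1 e) /= ?ePi ?eE // ge_min lexx.
Qed.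

Lemma feasible_le_opt_rate A lt i :
  feasible E C gamma P lam A lt -> lt i <= opt_rate i A.
Proof.
move=> [cap_ok rate_ok]; rewrite /opt_rate.
elim/big_rec: _ => [|e y /andP[ePi eE] le_y].
  by case/andP: (rate_ok i).
rewrite le_min le_y andbT; apply: le_trans (cap_ok e eE).
rewrite (bigD1 i) //= lerDl; apply: sumr_ge0 => j _.
by case/andP: (rate_ok j).
Qed.

Lemma T_val_opt_rate A : T_val E C gamma P lam A = \sum_(i < k) opt_rate i A.
Proof.
rewrite /T_val; set S := (X in sup X).
have S_opt : S (\sum_(i < k) opt_rate i A).
  by exists (opt_rate^~ A); split; first exact: feasible_opt_rate.
have S_ub : ubound S (\sum_(i < k) opt_rate i A).
  move=> _ [lt [lt_ok ->]]; apply: ler_sum => i _.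
  exact: feasible_le_opt_rate.
apply/eqP; rewrite eq_le ge_sup //=; last by exists (\sum_(i < k) opt_rate i A).
by rewrite ub_le_sup //; exists (\sum_(i < k) opt_rate i A).
Qed.

Local Notation Lam := (Lambda E C gamma P lam).

Lemma Lambda_opt_rate A : Lam A = \sum_(i < k) (lam i - opt_rate i A).
Proof. by rewrite /Lambda T_val_opt_rate sumrB. Qed.

Lemma Lambda_ge0 A : 0 <= Lam A.
Proof.
by rewrite Lambda_opt_rate sumr_ge0 // => i _; rewrite subr_ge0 opt_rate_le.
Qed.

Lemma Lambda_setU_ge A B : Lam A <= Lam (A :|: B).
Proof.
rewrite !Lambda_opt_rate ler_sum // => i _.
by rewrite opt_rate_setU lerD2l lerN2 ge_min lexx.
Qed.

Lemma Lambda_submod A B X :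
  Lam (A :|: B :|: X) + Lam X <= Lam (A :|: X) + Lam (B :|: X).
Proof.
rewrite !Lambda_opt_rate -!big_split ler_sum //= => i _.
have := min_submod (opt_rate i A) (opt_rate i B) (opt_rate i X).
by rewrite !opt_rate_setU; lra.
Qed.

End LambdaDecomposition.

Section Walks.
Variables (V : finType) (E : {set V * V}).

Lemma edges_of_nil (u : V) : edges_of u [::] = set0.
Proof. by apply/setP => z; rewrite !inE. Qed.

Lemma edges_of_cons (u a : V) p : edges_of u (a :: p) = (u, a) |: edges_of a p.
Proof. by rewrite /edges_of /= set_cons. Qed.

Lemma edges_of_cat (u : V) p q :
  edges_of u (p ++ q) = edges_of u p :|: edges_of (last u p) q.
Proof.
elim: p u => [|a p IHp] u /=; first by rewrite edges_of_nil set0U.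
by rewrite !edges_of_cons IHp setUA.
Qed.

Lemma dwalk_cat u v w p q :
  dwalk E u v p -> dwalk E v w q -> dwalk E u w (p ++ q).
Proof.
by rewrite /dwalk cat_path last_cat => /andP[-> /eqP ->] /andP[-> ->].
Qed.

Lemma is_dpath_setU u v w A B :
  is_dpath E u v A -> is_dpath E v w B -> is_dpath E u w (A :|: B).
Proof.
move=> [p [p_uv ->]] [q [q_vw ->]]; exists (p ++ q); split.
  exact: dwalk_cat p_uv q_vw.
by case/andP: p_uv => _ /eqP last_p; rewrite edges_of_cat last_p.
Qed.

Lemma dwalk_take_drop u w p m :
  dwalk E u w p -> exists v,
  [/\ dwalk E u v (take m p), dwalk E v w (drop m p) &
      edges_of u p = edges_of u (take m p) :|: edges_of v (drop m p)].
Proof.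
move=> p_uw; exists (last u (take m p)); move: p_uw.
rewrite /dwalk -[in path _ _ p](cat_take_drop m p).
rewrite -[in last _ p](cat_take_drop m p) cat_path last_cat => /andP[/andP[-> ->] ->].
by rewrite eqxx -edges_of_cat cat_take_drop.
Qed.

Hypothesis dag : simple_dag E.

Lemma dag_path_uniq u p : path (adj E) u p -> uniq (u :: p).
Proof.
elim: p u => [|a p IHp] u //= /andP[ua a_p].
have /= -> := IHp a a_p; rewrite andbT; apply/negP => u_in.
have: path (adj E) u (a :: p) by rewrite /= ua.
case/path.splitP: u_in => p1 p2; rewrite cat_path => /andP[cycle _].
by have := dag.2 _ _ cycle; rewrite last_rcons => /(_ erefl); case: p1 {cycle}.
Qed.

Lemma card_edges_of u p : path (adj E) u p -> #|edges_of u p| = size p.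
Proof.
move=> /dag_path_uniq/zip_uniql zip_uniq; rewrite /edges_of cardsE.
by rewrite (card_uniqP (zip_uniq _ p)) size_zip /= minnC /minn ltnSn.
Qed.

Lemma short_walk_sub_shortest u w p S :
  dwalk E u w p -> (size p <= 1)%N -> is_shortest_dpath E u w S ->
  edges_of u p \subset S.
Proof.
case: p => [|x [|//]] p_uw _ [q [q_uw -> q_min]].
  by rewrite edges_of_nil sub0set.
have := q_min _ p_uw; case: q q_uw {q_min} => [|y [|//]] q_uw _.
  move: p_uw q_uw; rewrite /dwalk /= => /andP[ux /eqP <-] /eqP ux_eq.
  by move: ux; rewrite ux_eq /adj (negbTE (dag.1 _)).
move: p_uw q_uw; rewrite /dwalk /= => /andP[_ /eqP ->] /andP[_ /eqP ->].
exact: subxx.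
Qed.

End Walks.

Section RecursiveGreedy.
Variables (R : realType) (V : finType) (E : {set V * V})
  (sp : V -> V -> option {set V * V}) (ord : seq V) (F : {set V * V} -> R).
Hypothesis sp_shortest : shortest_oracle E sp.
Hypothesis dag : simple_dag E.
Hypothesis ord_total : forall v, v \in ord.
Hypothesis F_setU_ge : forall A B, F A <= F (A :|: B).
Hypothesis F_submod :
  forall A B X, F (A :|: B :|: X) + F X <= F (A :|: X) + F (B :|: X).

Local Notation rg := (RG sp ord F).
Local Notation marg := (marg F).

Lemma marg_ge0 X A : 0 <= marg X A.
Proof. by rewrite /marg subr_ge0 setUC. Qed.

Lemma marg_setU_ge X A B : marg X A <= marg X (A :|: B).
Proof. by rewrite /marg lerD2r setUAC. Qed.

Lemma marg_setU X A B : marg X (A :|: B) = marg X A + marg (X :|: A) B.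
Proof.
by rewrite /marg [X :|: A]setUC setUA [B :|: A]setUC; lra.
Qed.

Lemma marg_setU_le X A B : marg X (A :|: B) <= marg X A + marg X B.
Proof. by rewrite /marg; have := F_submod A B X; lra. Qed.

Lemma marg_setU_approx X P1 P2 Q1 Q2 (c : R) :
  0 <= c -> marg X P1 <= c * marg X Q1 ->
  marg (X :|: Q1) P2 <= c * marg (X :|: Q1) Q2 ->
  marg X (P1 :|: P2) <= (c + 1) * marg X (Q1 :|: Q2).
Proof.
move=> c_ge0 P1_le P2_le; rewrite [marg X (Q1 :|: Q2)]marg_setU.
have P2_shift : marg X P2 <= marg X Q1 + marg (X :|: Q1) P2.
  by rewrite -marg_setU setUC marg_setU_ge.
have := marg_setU_le X P1 P2; have := marg_ge0 (X :|: Q1) Q2.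
by rewrite mulrDl mul1r [c * (_ + _)]mulrDr; lra.
Qed.

Lemma oracle_some u w p :
  dwalk E u w p -> exists2 S0, sp u w = Some S0 & is_shortest_dpath E u w S0.
Proof.
move=> p_uw; have := sp_shortest u w.
by case: (sp u w) => [S0|] S0_ok; [exists S0 | case: S0_ok; exists p].
Qed.

(* The loop body of [RG], so that [RG_succ] holds by conversion. *)
Definition RG_step i X u1 u2 (acc : {set V * V} * R) v :=
  match rg i u1 v X with
  | None => acc
  | Some Q1 =>
    match rg i v u2 (X :|: Q1) with
    | None => acc
    | Some Q2 =>
      if acc.2 < marg X (Q1 :|: Q2) then (Q1 :|: Q2, marg X (Q1 :|: Q2)) else acc
    end
  end.

Definition RG_best i X u1 u2 S0 := foldl (RG_step i X u1 u2) (S0, marg X S0) ord.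

Lemma RG_succ i u1 u2 X S0 :
  sp u1 u2 = Some S0 -> rg i.+1 u1 u2 X = Some (RG_best i X u1 u2 S0).1.
Proof. by move=> /= ->. Qed.

Lemma RG_step_score_ge i X u1 u2 acc v : acc.2 <= (RG_step i X u1 u2 acc v).2.
Proof.
rewrite /RG_step; case: (rg i u1 v X) => [Q1|//]; case: (rg i v u2 _) => [Q2|//].
by case: ifP => // /ltW.
Qed.

Lemma RG_best_marg i X u1 u2 S0 :
  (RG_best i X u1 u2 S0).2 = marg X (RG_best i X u1 u2 S0).1.
Proof.
apply: (foldl_ind (Q := fun acc => acc.2 = marg X acc.1)) => // acc v.
rewrite /RG_step; case: (rg i u1 v X) => [Q1|//]; case: (rg i v u2 _) => [Q2|//].
by case: ifP.
Qed.

Lemma RG_best_ge_init i X u1 u2 S0 : marg X S0 <= (RG_best i X u1 u2 S0).2.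
Proof. exact: (foldl_score_ge (@RG_step_score_ge i X u1 u2) (S0, marg X S0)). Qed.

Lemma RG_best_ge_split i X u1 u2 S0 v Q1 Q2 :
  rg i u1 v X = Some Q1 -> rg i v u2 (X :|: Q1) = Some Q2 ->
  marg X (Q1 :|: Q2) <= (RG_best i X u1 u2 S0).2.
Proof.
move=> rg1 rg2.
apply: (foldl_score_ge_mem (@RG_step_score_ge i X u1 u2) _ (ord_total v)) => acc.
by rewrite /RG_step rg1 rg2; case: ltP.
Qed.

Lemma RG_dpath i u1 u2 X Q : rg i u1 u2 X = Some Q -> is_dpath E u1 u2 Q.
Proof.
elim: i u1 u2 X Q => [|i IHi] u1 u2 X Q; have := sp_shortest u1 u2.
  by rewrite /=; case: (sp u1 u2) => [S0 [p [p_uw -> _]]|//] [<-]; exists p.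
case sp_eq: (sp u1 u2) => [S0|]; last by rewrite /= sp_eq.
move=> [p [p_uw S0_eq _]]; rewrite (RG_succ _ _ sp_eq) => -[<-].
apply: (foldl_ind (Q := fun acc => is_dpath E u1 u2 acc.1)) => [|acc v acc_ok].
  by exists p.
rewrite /RG_step; case rg1: (rg i u1 v X) => [Q1|//].
case rg2: (rg i v u2 _) => [Q2|//].
by case: ifP => // _; exact: is_dpath_setU (IHi _ _ _ _ rg1) (IHi _ _ _ _ rg2).
Qed.

Lemma RG_ge_shortest i u1 u2 X S0 :
  sp u1 u2 = Some S0 -> exists2 Q, rg i u1 u2 X = Some Q & marg X S0 <= marg X Q.
Proof.
case: i => [|i] sp_eq; first by exists S0; rewrite //= sp_eq.
exists (RG_best i X u1 u2 S0).1; first exact: RG_succ.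
by rewrite -RG_best_marg RG_best_ge_init.
Qed.

Lemma RG_approx_short i u1 u2 X p :
  dwalk E u1 u2 p -> (size p <= 1)%N ->
  exists2 Q, rg i u1 u2 X = Some Q & marg X (edges_of u1 p) <= marg X Q.
Proof.
move=> p_uw p_short; have [S0 sp_eq S0_shortest] := oracle_some p_uw.
have [Q rg_eq S0_le] := RG_ge_shortest i X sp_eq; exists Q => //.
apply: le_trans S0_le.
rewrite -(setUidPr (short_walk_sub_shortest dag p_uw p_short S0_shortest)).
exact: marg_setU_ge.
Qed.

Lemma RG_approx i j u1 u2 X p :
  (j <= i)%N -> dwalk E u1 u2 p -> (size p <= 2 ^ j)%N ->
  exists2 Q, rg i u1 u2 X = Some Q &
    marg X (edges_of u1 p) <= j.+1%:R * marg X Q.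
Proof.
elim: i j u1 u2 X p => [|i IHi] [|j] u1 u2 X p // j_le p_uw.
all: rewrite ?expn0 => p_size.
- by have [Q ? ?] := RG_approx_short 0 X p_uw p_size; exists Q; rewrite ?mul1r.
- by have [Q ? ?] := RG_approx_short i.+1 X p_uw p_size; exists Q; rewrite ?mul1r.
have [v [take_uv drop_vw ->]] := dwalk_take_drop (2 ^ j) p_uw.
have take_size : (size (take (2 ^ j) p) <= 2 ^ j)%N.
  by rewrite size_take_min geq_minl.
have drop_size : (size (drop (2 ^ j) p) <= 2 ^ j)%N.
  by rewrite size_drop; move: p_size; rewrite expnS; lia.
have [Q1 rg1 Q1_approx] := IHi _ _ _ X _ j_le take_uv take_size.
have [Q2 rg2 Q2_approx] := IHi _ _ _ (X :|: Q1) _ j_le drop_vw drop_size.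
have [S0 sp_eq _] := oracle_some p_uw.
exists (RG_best i X u1 u2 S0).1; first exact: RG_succ.
rewrite -RG_best_marg.
apply: le_trans (ler_wpM2l (ler0n _ j.+2) (RG_best_ge_split S0 rg1 rg2)).
by rewrite -natr1; apply: marg_setU_approx.
Qed.

Lemma RG_approx_set0 i j u1 u2 p :
  0 <= F set0 -> (j <= i)%N -> dwalk E u1 u2 p -> (size p <= 2 ^ j)%N ->
  exists2 Q, rg i u1 u2 set0 = Some Q & F (edges_of u1 p) / j.+1%:R <= F Q.
Proof.
move=> F0_ge0 j_le p_uw p_size.
have [Q rg_eq Q_approx] := RG_approx set0 j_le p_uw p_size; exists Q => //.
move: Q_approx; rewrite /marg !setU0 ler_pdivrMr ?ltr0Sn // [_ * _.+1%:R]mulrC.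
have : 0 <= j%:R * F set0 by rewrite mulr_ge0.
by rewrite -natr1 mulrDl mul1r [_ * (_ - _)]mulrDr; lra.
Qed.

End RecursiveGreedy.

Theorem theorem1 (R : realType) (V : finType) (E : {set V * V}) (s t : V)
    (C : V * V -> R) (gamma : R) (k : nat) (P : 'I_k -> {set V * V})
    (lam : 'I_k -> R) (sp : V -> V -> option {set V * V}) (ord : seq V)
    (I : nat) (Estar : {set V * V}) :
  simple_dag E ->
  (exists q, dwalk E s t q) ->
  (forall e, e \in E -> 0 <= C e) ->
  0 < gamma ->
  (forall e, e \in E -> gamma <= C e) ->
  (forall i, exists a b q, dwalk E a b q /\ P i = edges_of a q) ->
  (forall i, 0 <= lam i) ->
  (forall e, e \in E -> \sum_(i < k | e \in P i) lam i <= C e) ->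
  (forall i j, i != j -> [disjoint P i & P j]) ->
  shortest_oracle E sp ->
  perm_eq ord (enum V) ->
  is_dpath E s t Estar ->
  (forall Q, is_dpath E s t Q ->
     Lambda E C gamma P lam Q <= Lambda E C gamma P lam Estar) ->
  (up_log 2 #|Estar| <= I)%N ->
  exists Ef,
    RG sp ord (Lambda E C gamma P lam) I s t finset.set0 = Some Ef /\
    is_dpath E s t Ef /\
    Lambda E C gamma P lam Ef >=
      Lambda E C gamma P lam Estar / (up_log 2 #|Estar|).+1%:R.
Proof.
move=> dag _ _ gamma_gt0 gamma_le_cap _ lam_ge0 _ disjoint_paths sp_shortest
  ord_perm [q [q_st ->]] _ depth_ge.
have ord_total v : v \in ord by rewrite (perm_mem ord_perm) mem_enum.
have q_size : (size q <= 2 ^ up_log 2 #|edges_of s q|)%N.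
  by rewrite -(card_edges_of dag (andP q_st).1) up_logP.
have [Ef rg_eq Ef_approx] := RG_approx_set0 sp_shortest dag ord_total
  (Lambda_setU_ge gamma_gt0 gamma_le_cap lam_ge0 disjoint_paths)
  (Lambda_submod gamma_gt0 gamma_le_cap lam_ge0 disjoint_paths)
  (Lambda_ge0 gamma_gt0 gamma_le_cap lam_ge0 disjoint_paths set0)
  depth_ge q_st q_size.
by exists Ef; split; last split; [| exact: RG_dpath rg_eq |].
Qed.
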